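(* Let $n\ge 13$, let $D=(\mathcal V,\mathcal A)$ be a $P_{2,2}$-free digraph on $n$ vertices with exactly $ex(n)$ arcs, let $k$ be the maximum out-degree of $D$, and let $v\in\mathcal V$ with $d^+(v)=k$. Then $\alpha(v)\le 1$ and $\tau(v)\le 2$; that is, every vertex of $D$ has at most one out-neighbour in $\mathcal V\setminus N^+(v)$, and $v$ has at most two out-neighbours that are also in-neighbours of $v$.
   Context: All digraphs are strict: no loops and no parallel arcs (2-cycles allowed). $P_{2,2}$ is the digraph on four distinct vertices $a,b,c,d$ with arcs $a\to b$, $b\to d$, $a\to c$, $c\to d$; $P_{2,2}$-free means containing no (not necessarily induced) copy of $P_{2,2}$. $ex(n)$ is the maximum number of arcs in a $P_{2,2}$-free digraph on $n$ vertices. $N^+(v)$, $N^-(v)$ are the sets of out- and in-neighbours, $d^+(v)=|N^+(v)|$. $\mathcal V_2(v)=\mathcal V\setminus N^+(v)$ (note $v\in\mathcal V_2(v)$), $\alpha(v)=\max_{u\in\mathcal V} e(u,\mathcal V_2(v))$ where $e(u,S)$ counts arcs from $u$ into $S$, and $\tau(v)=|N^+(v)\cap N^-(v)|$. *)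

From mathcomp Require Import all_boot.
Set Implicit Arguments. Unset Strict Implicit. Unset Printing Implicit Defensive.

(* A strict digraph on a finite vertex type T is an irreflexive relation
   r : rel T (arc x -> y iff r x y); parallel arcs are impossible, 2-cycles allowed. *)

Definition narcs (T : finType) (r : rel T) : nat := #|[set p : T * T | r p.1 p.2]|.

Definition P22_free (T : finType) (r : rel T) : bool :=
  [forall a : T, forall b : T, forall c : T, forall d : T,
     uniq [:: a; b; c; d] ==> ~~ [&& r a b, r b d, r a c & r c d]].

Definition loopless (T : finType) (r : rel T) : bool := [forall x : T, ~~ r x x].

Definition ex (n : nat) : nat :=
  \max_(f : {ffun 'I_n * 'I_n -> bool} |
        loopless (fun x y => f (x, y)) && P22_free (fun x y => f (x, y)))
     narcs (fun x y => f (x, y)).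

Definition outN (T : finType) (r : rel T) (v : T) : {set T} := [set u | r v u].
Definition inN (T : finType) (r : rel T) (v : T) : {set T} := [set u | r u v].
Definition outdeg (T : finType) (r : rel T) (v : T) : nat := #|outN r v|.

Definition V2 (T : finType) (r : rel T) (v : T) : {set T} := ~: outN r v.

Definition e_to (T : finType) (r : rel T) (u : T) (S : {set T}) : nat :=
  #|outN r u :&: S|.

Definition alpha (T : finType) (r : rel T) (v : T) : nat :=
  \max_(u : T) e_to r u (V2 r v).

Definition tau (T : finType) (r : rel T) (v : T) : nat := #|outN r v :&: inN r v|.

From mathcomp Require Import all_boot zify.
Set Implicit Arguments. Unset Strict Implicit. Unset Printing Implicit Defensive.

(* Let S = N^+(v), so k = |S| is the maximum out-degree, let m = |V_2(v)|,
   e2 w = e(w, V_2(v)), and let D = sum_(w in V_2(v)) (k - d^+(w)) be the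
   out-degree deficit of V_2(v).  Two out-neighbours of a vertex w have
   disjoint out-neighbourhoods outside w, otherwise they would close a P_{2,2}.
   Hence the vertices of S send at most n - 1 + tau(v) arcs and the digraph has
   at most mk - D + n - 1 + tau(v) arcs; against the construction showing
   ex(n) >= n^2/4 + n - 1 this gives the slack inequality
   (m - k)^2 + 4D <= 4 tau(v), so the digraph is almost balanced and almost
   out-regular on V_2(v).  A vertex w <> v has at most one out-neighbour in
   N^+(v) /\ N^-(v), so e2 <= H on V_2(v) gives tau(v) <= H + 1; counting the
   arcs leaving N^+(w) /\ V_2(v), according to whether w -> v, then turns
   e2 <= H into e2 <= H - 1.  Starting from e2 <= 3 this descends to e2 <= 1
   and tau(v) <= 2, and one more count gives e(u, V_2(v)) <= 1 for u in S. *)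

Section Counting.
Variable T : finType.
Implicit Types (A B : {set T}) (r : rel T).

Lemma leq_sum_subset A B (F : T -> nat) :
  A \subset B -> \sum_(x in A) F x <= \sum_(x in B) F x.
Proof.
by move=> /subsetP sAB; apply: (sub_le_big leqnn (fun x y => leq_addr y x)).
Qed.

Lemma card_setI_sum A B : #|A :&: B| = \sum_(x in A) (x \in B).
Proof.
rewrite -sum1_card (eq_bigl (fun x => (x \in A) && (x \in B))) => [|x]; last first.
  by rewrite inE.
by rewrite big_mkcondr; apply: eq_bigr => x _; case: (x \in B).
Qed.

Lemma card_setID1_le A B w : #|A :&: B| <= #|A :&: (B :\ w)| + 1.
Proof. by rewrite setIDA (cardsD1 w (A :&: B)) addnC leq_add2l; case: (w \in _). Qed.

Lemma outdeg_sum r x : outdeg r x = \sum_y (r x y : nat).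
Proof.
by rewrite /outdeg -sum1_card big_mkcond /=; apply: eq_bigr => y _; rewrite inE.
Qed.

Lemma narcs_sum r : narcs r = \sum_x outdeg r x.
Proof.
rewrite /narcs -sum1_card big_mkcond /=.
rewrite (eq_bigr (fun p : T * T => (r p.1 p.2 : nat))) => [|p _]; last by rewrite inE.
rewrite -(pair_bigA _ (fun x y => (r x y : nat))) /=.
by apply: eq_bigr => x _; rewrite outdeg_sum.
Qed.
End Counting.

Section P22Free.
Variables (T : finType) (r : rel T).
Hypotheses (r_loopless : loopless r) (r_P22 : P22_free r).

Lemma arc_neq x y : r x y -> x != y.
Proof. by move=> rxy; apply: contraTneq rxy => ->; apply: (forallP r_loopless). Qed.

Lemma no_P22 a b c d : a != d -> b != c -> r a b -> r b d -> r a c -> r c d -> False.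
Proof.
move=> ad bc rab rbd rac rcd.
have /implyP/(_ _)/negP := forallP (forallP (forallP (forallP r_P22 a) b) c) d.
apply; last by rewrite rab rbd rac rcd.
by rewrite /= !inE !negb_or ad bc !arc_neq.
Qed.

Lemma card_outN_inN_le1 w v : w != v -> #|outN r w :&: inN r v| <= 1.
Proof.
move=> wv; apply/card_le1_eqP => x y; rewrite !inE => /andP[wx xv] /andP[wy yv].
by case: (eqVneq x y) => // xy; case: (no_P22 wv xy wx xv wy yv).
Qed.

Lemma outN_outN_sub1 w v z :
  r w v -> r w z -> z != v -> outN r z :&: outN r v \subset [set w].
Proof.
move=> wv wz zv; apply/subsetP => b; rewrite !inE => /andP[zb vb].
by case: (eqVneq b w) => // bw; case: (no_P22 _ zv wz zb wv vb); rewrite eq_sym.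
Qed.

Lemma sum_card_outNI_le w (Z U : {set T}) : w \notin U -> Z \subset outN r w ->
  \sum_(z in Z) #|outN r z :&: U| <= #|U|.
Proof.
move=> wU /subsetP Zw.
rewrite (eq_bigr (fun z => \sum_(d in U) (d \in outN r z))) => [|z _]; last first.
  by rewrite setIC card_setI_sum.
rewrite exchange_big /= -sum1_card; apply: leq_sum => d dU.
rewrite (eq_bigr (fun z => (z \in inN r d) : nat)) => [|z _]; last by rewrite !inE.
rewrite -card_setI_sum; apply/card_le1_eqP => x y.
rewrite !inE => /andP[/Zw xw xd] /andP[/Zw yw yd]; rewrite !inE in xw yw.
case: (eqVneq x y) => // xy.
by case: (no_P22 _ xy xw xd yw yd); apply: contraNneq wU => ->.
Qed.

Lemma card_outN_outN_split z v : z != v ->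
  #|outN r z :&: outN r v| <= #|outN r z :&: (outN r v :\: inN r v)| + 1.
Proof.
move=> zv; rewrite -(cardsID (inN r v) (outN r z :&: outN r v)) setIDA addnC leq_add2l.
apply: leq_trans (card_outN_inN_le1 zv); apply: subset_leq_card.
by rewrite -setIA; apply/setIS/subsetIr.
Qed.

Lemma sum_outdeg_outN_le v :
  \sum_(x in outN r v) outdeg r x <= #|T| - 1 + tau r v.
Proof.
have outdeg_split x : outdeg r x = #|outN r x :&: [set~ v]| + (x \in inN r v).
  by rewrite /outdeg (cardsD1 v) addnC setDE !inE.
rewrite (eq_bigr _ (fun x _ => outdeg_split x)) big_split /= -card_setI_sum.
apply: leq_add; last by [].
by rewrite subn1 -(cardsC1 v); apply: (sum_card_outNI_le (w := v)); rewrite ?setC11.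
Qed.
End P22Free.

Lemma sum_ord_cond_nat n p a b : p <= n ->
  \sum_(x < n) (if x < p then a else b) = p * a + (n - p) * b.
Proof.
move=> pn; rewrite -(big_mkord xpredT (fun x => if x < p then a else b)).
rewrite (big_cat_nat (leq0n p) pn) /=.
rewrite (@eq_big_nat _ _ _ 0 p _ (fun=> a)) => [|x /andP[_ ->]] //.
rewrite (@eq_big_nat _ _ _ p n _ (fun=> b)) => [|x /andP[px _]]; last first.
  by rewrite ltnNge px.
by rewrite !sum_nat_const_nat subn0.
Qed.

Lemma card_ord_geq n p : p <= n -> #|[set y : 'I_n | p <= y]| = n - p.
Proof.
move=> pn; rewrite -sum1_card big_mkcond /=.
rewrite (eq_bigr (fun y : 'I_n => if y < p then 0 else 1)) => [|y _]; last first.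
  by rewrite inE ltnNge; case: (p <= y).
by rewrite sum_ord_cond_nat // muln0 muln1.
Qed.

Definition extremal_arc (p x y : nat) : bool :=
  [|| (x < p) && (p <= y), (p <= x) && (y + p == x)
    | [&& x < p, y < p & if x == 0 then y == p.-1 else y == 0]].

Section ExtremalDigraph.
Variables n p : nat.
Hypotheses (p_gt1 : 1 < p) (p_le_n : p <= n) (n_lt_2p : n < 2 * p).

Definition extremal : rel 'I_n := fun x y => extremal_arc p x y.

Lemma extremal_arcP x y : extremal_arc p x y ->
  [\/ x < p <= y, p <= x /\ y + p = x, x = 0 /\ y = p.-1 | 0 < x < p /\ y = 0].
Proof.
case/or3P => [/andP[-> ->]|/andP[? /eqP ?]|/and3P[xp _]]; [exact: Or41|exact: Or42|].
by case: eqVneq => [-> /eqP|x0 /eqP]; [constructor 3|constructor 4; rewrite lt0n x0].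
Qed.

Lemma extremal_loopless : loopless extremal.
Proof. by apply/forallP => x; apply/negP => /extremal_arcP; case; lia. Qed.

Lemma extremal_P22_free : P22_free extremal.
Proof.
apply/forallP => a; apply/forallP => b; apply/forallP => c; apply/forallP => d.
apply/implyP; rewrite /= !inE !negb_or -!val_eqE /=.
move=> /andP[/and3P[_ _ /eqP ad] /andP[/andP[/eqP bc _] _]].
apply/negP => /and4P[/extremal_arcP ab /extremal_arcP bd].
move=> /extremal_arcP ac /extremal_arcP cd.
have := ltn_ord a; have := ltn_ord b; have := ltn_ord c; have := ltn_ord d.
by case: ab; case: bd; case: ac; case: cd; lia.
Qed.

Lemma extremal_outdeg (x : 'I_n) : (if x < p then n - p + 1 else 1) <= outdeg extremal x.
Proof.
case: ifP => xp.
  have y0n : (if x == 0 :> nat then p.-1 else 0) < n by case: ifP; lia.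
  have sub : Ordinal y0n |: [set y : 'I_n | p <= y] \subset outN extremal x.
    apply/subsetP => y; rewrite !inE => /predU1P[-> | py].
      by rewrite /extremal /extremal_arc /= xp; apply/or3P/Or33; case: ifP => _; lia.
    by rewrite /extremal /extremal_arc xp py.
  apply: leq_trans (subset_leq_card sub).
  by rewrite cardsU1 card_ord_geq // inE /= addnC; case: ifP => _; lia.
have yn : x - p < n by have := ltn_ord x; lia.
apply/card_gt0P; exists (Ordinal yn).
by rewrite inE /extremal /extremal_arc /=; apply/or3P/Or32; lia.
Qed.

Lemma extremal_narcs : p * (n - p) + n <= narcs extremal.
Proof.
rewrite narcs_sum; apply: (leq_trans _ (leq_sum _ (fun x _ => extremal_outdeg x))).
rewrite sum_ord_cond_nat //; lia.
Qed.
End ExtremalDigraph.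

Section RelExtensionality.
Variables (T : finType) (r1 r2 : rel T).
Hypothesis r12 : r1 =2 r2.

Lemma eq_narcs : narcs r1 = narcs r2.
Proof. by apply: eq_card => e; rewrite !inE r12. Qed.

Lemma eq_loopless : loopless r1 = loopless r2.
Proof. by apply: eq_forallb => x; rewrite r12. Qed.

Lemma eq_P22_free : P22_free r1 = P22_free r2.
Proof.
apply: eq_forallb => a; apply: eq_forallb => b; apply: eq_forallb => c.
by apply: eq_forallb => d; rewrite !r12.
Qed.
End RelExtensionality.

Lemma narcs_le_ex n (r : rel 'I_n) : loopless r -> P22_free r -> narcs r <= ex n.
Proof.
move=> rl rP; pose f := [ffun e : 'I_n * 'I_n => r e.1 e.2].
have fE : (fun x y => f (x, y)) =2 r by move=> x y; rewrite ffunE.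
rewrite -(eq_narcs fE); apply: leq_bigmax_cond.
by rewrite (eq_loopless fE) (eq_P22_free fE) rl rP.
Qed.

Lemma ex_lower_bound n : 1 < n -> n * n + 4 * n <= 4 * ex n + 4.
Proof.
move=> n_gt1; set p := n./2.+1.
have [p_gt1 p_le_n n_lt_2p] : [/\ 1 < p, p <= n & n < 2 * p].
  by have := odd_double_half n; rewrite /p -addnn; case: (odd n) => /= e; split; lia.
have := narcs_le_ex (extremal_loopless p_gt1 p_le_n n_lt_2p)
                    (extremal_P22_free p_gt1 p_le_n n_lt_2p).
move/(leq_trans (extremal_narcs p_gt1 p_le_n n_lt_2p)).
by have := odd_double_half n; rewrite /p -addnn; case: (odd n) => /= <-; nia.
Qed.

Lemma leq_cross_mul a b t k : a <= t -> b <= k -> a * k + b * t <= t * k + a * b.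
Proof. nia. Qed.

Definition slack (m k tau D : nat) : Prop :=
  [/\ 13 <= m + k, m * m + k * k + 4 * D <= 2 * m * k + 4 * tau & tau <= k].

(* The hints [nat_Cauchy m (k + c)] and [nat_Cauchy k (m + c)] are the tangent
   lines (m - k)^2 >= 2c(m - k) - c^2 of the square in the slack inequality. *)
Section SlackArithmetic.
Variables m k tau D : nat.
Hypothesis mktD_slack : slack m k tau D.

Lemma slack_k_ge5 : 5 <= k.
Proof. by case: mktD_slack => *; have := (nat_Cauchy m (k + 5)).1; lia. Qed.

Lemma slack_D_le_tau : D <= tau.
Proof. by case: mktD_slack => *; have := (nat_Cauchy m k).1; lia. Qed.

(* What counting the arcs out of N^+(w) /\ V_2(v) gives for t = e2 w when
   w is in V_2(v) and e2 <= H on V_2(v); the first disjunct is the case w -> v,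
   where the other out-neighbours of w have no out-neighbour in N^+(v). *)
Definition e2_step H t :=
  (t - 1) * k <= D + minn (m + t - 2) ((t - 1) * H)
  \/ t * k + tau <= D + k + t + minn (m + t - 1) (t * H).

Lemma e2_step_init t : t <= m -> e2_step m t -> t <= 3.
Proof.
move=> tm step; rewrite leqNgt; apply/negP => t4.
have k5 := slack_k_ge5; case: mktD_slack => *.
have := (nat_Cauchy m (k + 2)).1.
have := leq_cross_mul t4 (ltnW k5); have := leq_cross_mul t4 (ltnW (ltnW k5)).
by case: step; lia.
Qed.

Lemma e2_step_descent H t : 2 <= H <= 3 -> tau <= H.+1 -> e2_step H t -> t < H.
Proof.
move=> /andP[H2 H3] tauH step; rewrite ltnNge; apply/negP => tH.
have k5 := slack_k_ge5; have Dt := slack_D_le_tau; case: mktD_slack => *.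
have := (nat_Cauchy m (k + 1)).1; have := (nat_Cauchy m (k + 3)).1.
have k2 : 2 <= k by lia. have k3 : 3 <= k by lia. have k4 : 4 <= k by lia.
have := leq_cross_mul tH k2; have := leq_cross_mul tH k3; have := leq_cross_mul tH k4.
have [EH|EH] : H = 2 \/ H = 3 by lia.
all: by subst H; case: step; lia.
Qed.

Lemma tau_bound H : 1 <= H <= 3 -> (m - 1) * tau <= D + (m - 1) * H.+1 -> tau <= H.+1.
Proof.
move=> /andP[H1 H3] sumV2; rewrite leqNgt; apply/negP => tauH.
have Dt := slack_D_le_tau; case: mktD_slack => *.
have := (nat_Cauchy k (m + 1)).1; have := (nat_Cauchy k (m + 2)).1.
have := (nat_Cauchy k (m + 5)).1.
have [m1|m2] := leqP m 1; first by nia.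
have := leq_cross_mul m2 tauH.
have [EH|[EH|EH]] : H = 1 \/ H = 2 \/ H = 3 by lia.
all: by subst H; lia.
Qed.

Lemma e2_out_bound t : tau <= 2 -> t * k + 1 <= D + k + 2 * t -> t <= 1.
Proof.
move=> tau2 step; rewrite leqNgt; apply/negP => t2.
have k5 := slack_k_ge5; have Dt := slack_D_le_tau; case: mktD_slack => *.
have := (nat_Cauchy m (k + 1)).1; have := leq_cross_mul t2 (ltnW (ltnW k5)).
lia.
Qed.
End SlackArithmetic.

Section MaxOutdegreeVertex.
Variables (T : finType) (r : rel T) (v : T).
Hypotheses (r_loopless : loopless r) (r_P22 : P22_free r).
Hypothesis v_max : forall u, outdeg r u <= outdeg r v.

Let S := outN r v.
Let R := V2 r v.
Let k := outdeg r v.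
Let m := #|R|.
Let e2 x := e_to r x R.
Let D := \sum_(w in R) (k - outdeg r w).

Lemma V2_v : v \in R.
Proof. by rewrite !inE; apply/negP => /(arc_neq r_loopless); rewrite eqxx. Qed.

Lemma card_V2_gt0 : 0 < m.
Proof. by apply/card_gt0P; exists v; apply: V2_v. Qed.

Lemma card_V2_outN : m + k = #|T|.
Proof. by rewrite addnC cardsC. Qed.

Lemma tau_le_outdeg : tau r v <= k.
Proof. by apply: subset_leq_card; apply: subsetIl. Qed.

Lemma outdeg_split x : outdeg r x = #|outN r x :&: S| + e2 x.
Proof. by rewrite /e2 /e_to /R /V2 -setDE cardsID. Qed.

Lemma sum_outdeg_deficit (Z : {set T}) :
  \sum_(z in Z) outdeg r z + \sum_(z in Z) (k - outdeg r z) = #|Z| * k.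
Proof.
by rewrite -big_split -sum_nat_const; apply: eq_bigr => z _ /=; rewrite subnKC.
Qed.

Lemma card_mul_le_sum (Z : {set T}) :
  Z \subset R -> #|Z| * k <= \sum_(z in Z) outdeg r z + D.
Proof. by move=> ZR; rewrite -sum_outdeg_deficit leq_add2l leq_sum_subset. Qed.

Lemma narcs_deficit_le : narcs r + D <= m * k + (#|T| - 1) + tau r v.
Proof.
have notV2 : \sum_(x | x \notin R) outdeg r x = \sum_(x in S) outdeg r x.
  by apply: eq_bigl => x; rewrite !inE negbK.
rewrite narcs_sum (bigID (fun x => x \in R)) /= notV2.
have := sum_outdeg_outN_le r_loopless r_P22 v; have := sum_outdeg_deficit R.
rewrite /D /m /S => h1 h2; set n := #|T| in h2 *; lia.
Qed.

Lemma outdeg_le_deficit w : w != v -> outdeg r w <= k - tau r v + 1 + e2 w.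
Proof.
move=> wv; rewrite outdeg_split leq_add2r.
apply: leq_trans (card_outN_outN_split r_loopless r_P22 wv) _; rewrite leq_add2r.
by rewrite -cardsD subset_leq_card // subsetIr.
Qed.

Lemma tau_sum_le H : {in R, forall w, e2 w <= H} ->
  (m - 1) * tau r v <= D + (m - 1) * H.+1.
Proof.
move=> e2H; have card_V2v : #|R :\ v| = m - 1 by rewrite /m (cardsD1 v R) V2_v addKn.
rewrite -card_V2v -!sum_nat_const.
apply: (@leq_trans (\sum_(w in R :\ v) (k - outdeg r w + H.+1))).
  apply: leq_sum => w /setD1P[wv wR].
  have := outdeg_le_deficit wv; have := e2H w wR; have := v_max w.
  have := tau_le_outdeg; lia.
by rewrite big_split leq_add2r leq_sum_subset // subD1set.
Qed.

Lemma e2_le_card_V2 x : e2 x <= m.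
Proof. by apply: subset_leq_card; apply: subsetIr. Qed.

Lemma sum_e2_le w (Z : {set T}) :
  w \in R -> Z \subset outN r w -> \sum_(z in Z) e2 z <= m - 1 + #|Z|.
Proof.
move=> wR Zw; have card_V2w : #|R :\ w| = m - 1 by rewrite /m (cardsD1 w R) wR addKn.
apply: (@leq_trans (\sum_(z in Z) (#|outN r z :&: (R :\ w)| + 1))).
  by apply: leq_sum => z _; apply: card_setID1_le.
rewrite big_split /= sum1_card leq_add2r -card_V2w.
by rewrite (sum_card_outNI_le r_loopless r_P22 (w := w)) // setD11.
Qed.

Lemma e2_stepP H w : w \in R -> {in R, forall z, e2 z <= H} ->
  e2_step m k (tau r v) D H (e2 w).
Proof.
move=> wR e2H; set Z := outN r w :&: R.
have ZR : Z \subset R by apply: subsetIr.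
have Zw : Z \subset outN r w by apply: subsetIl.
have sum_e2 (Y : {set T}) :
    Y \subset Z -> \sum_(z in Y) e2 z <= minn (m - 1 + #|Y|) (#|Y| * H).
  move=> YZ; rewrite leq_min (sum_e2_le wR (subset_trans YZ Zw)) -sum_nat_const.
  by apply: leq_sum => z /(subsetP (subset_trans YZ ZR)); apply: e2H.
have sumZ := card_mul_le_sum ZR; have e2w : e2 w = #|Z| by [].
have [vZ|vZ] := boolP (v \in Z); [left|right].
- have wv : r w v by move: vZ; rewrite !inE => /andP[].
  have outdeg_Z z : z \in Z :\ v -> outdeg r z = e2 z.
    move=> /setD1P[zv]; rewrite !inE => /andP[wz _].
    rewrite outdeg_split -[RHS]add0n; congr (_ + _); apply/eqP.
    rewrite cards_eq0 -subset0; apply/subsetP => b zb.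
    have /set1P bw := subsetP (outN_outN_sub1 r_loopless r_P22 wv wz zv) b zb.
    by move: zb wR; rewrite bw !inE => /andP[_ ->].
  rewrite (big_setD1 v vZ) (eq_bigr _ outdeg_Z) /= in sumZ.
  have := sum_e2 _ (subD1set Z v).
  rewrite -/k e2w (cardsD1 v Z) vZ add1n !subn1 /= mulSn in sumZ *.
  have := card_V2_gt0; lia.
- have sum_outN_S : \sum_(z in Z) #|outN r z :&: S| <= k - tau r v + #|Z|.
    apply: (@leq_trans (\sum_(z in Z) (#|outN r z :&: (S :\: inN r v)| + 1))).
      apply: leq_sum => z zZ; apply: (card_outN_outN_split r_loopless r_P22).
      by apply: contraNneq vZ => <-.
    rewrite big_split sum1_card leq_add2r -cardsD.
    apply: (sum_card_outNI_le r_loopless r_P22 _ Zw).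
    by move: wR; rewrite /S !inE => /negbTE ->; rewrite andbF.
  rewrite (eq_bigr _ (fun z _ => outdeg_split z)) big_split /= in sumZ.
  have := sum_e2 Z (subxx Z); have := tau_le_outdeg; have := card_V2_gt0.
  rewrite e2w; lia.
Qed.

Lemma e2_outN_step u : u \in S -> {in R, forall z, e2 z <= 1} ->
  e2 u * k + 1 <= D + k + 2 * e2 u.
Proof.
move=> uS e2_le1; set Z := outN r u :&: R.
have ZR : Z \subset R by apply: subsetIr.
have Zu : Z \subset outN r u by apply: subsetIl.
have sumZ := card_mul_le_sum ZR; have e2u : e2 u = #|Z| by [].
have card_Su : #|S :\ u| = k - 1 by rewrite /k /outdeg -/S (cardsD1 u S) uS addKn.
have sum_outN_S : \sum_(z in Z) #|outN r z :&: S| <= k - 1 + #|Z|.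
  apply: (@leq_trans (\sum_(z in Z) (#|outN r z :&: (S :\ u)| + 1))).
    by apply: leq_sum => z _; apply: card_setID1_le.
  rewrite big_split sum1_card leq_add2r -card_Su.
  by apply: (sum_card_outNI_le r_loopless r_P22 _ Zu); rewrite setD11.
have sum_e2 : \sum_(z in Z) e2 z <= #|Z|.
  by rewrite -sum1_card; apply: leq_sum => z /(subsetP ZR); apply: e2_le1.
have k_gt0 : 0 < k by apply/card_gt0P; exists u.
rewrite (eq_bigr _ (fun z _ => outdeg_split z)) big_split /= in sumZ.
rewrite e2u; lia.
Qed.

Section Extremal.
Hypotheses (T_ge13 : 13 <= #|T|) (r_extremal : narcs r = ex #|T|).

Lemma extremal_slack : m * m + k * k + 4 * D <= 2 * m * k + 4 * tau r v.
Proof.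
have := ex_lower_bound (leq_trans (isT : 1 < 13) T_ge13).
rewrite -r_extremal -card_V2_outN; have := narcs_deficit_le.
rewrite -card_V2_outN; nia.
Qed.

Lemma V2_slack : slack m k (tau r v) D.
Proof. by split; rewrite ?card_V2_outN ?extremal_slack ?tau_le_outdeg. Qed.

Lemma e2_V2_le3 : {in R, forall w, e2 w <= 3}.
Proof.
move=> w wR; apply: (e2_step_init V2_slack (e2_le_card_V2 w)).
by apply: e2_stepP => // z _; apply: e2_le_card_V2.
Qed.

Lemma e2_V2_descent H : 2 <= H <= 3 -> {in R, forall w, e2 w <= H} ->
  {in R, forall w, e2 w <= H.-1}.
Proof.
move=> H23 e2H w wR.
have tauH : tau r v <= H.+1.
  apply: (tau_bound V2_slack); last exact: tau_sum_le.
  by case/andP: H23 => H2 ->; rewrite (ltnW H2).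
have := e2_step_descent V2_slack H23 tauH (e2_stepP wR e2H).
by move=> lt_e2H; rewrite -ltnS (ltn_predK lt_e2H).
Qed.

Lemma e2_V2_le1 : {in R, forall w, e2 w <= 1}.
Proof. exact: (e2_V2_descent (H := 2) isT (e2_V2_descent (H := 3) isT e2_V2_le3)). Qed.

Lemma tau_le2 : tau r v <= 2.
Proof. exact: (tau_bound V2_slack (H := 1) isT (tau_sum_le e2_V2_le1)). Qed.

Lemma e2_le1 u : e2 u <= 1.
Proof.
have [uS|uR] := boolP (u \in S); last by apply: e2_V2_le1; rewrite /R /V2 in_setC.
apply: (e2_out_bound V2_slack tau_le2).
exact: e2_outN_step uS e2_V2_le1.
Qed.

Lemma alpha_le1 : alpha r v <= 1.
Proof. by apply/bigmax_leqP => u _; apply: e2_le1. Qed.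
End Extremal.
End MaxOutdegreeVertex.

Theorem lemma3p5 (T : finType) (r : rel T) (v : T) :
  13 <= #|T| ->
  loopless r ->
  P22_free r ->
  narcs r = ex #|T| ->
  (forall u : T, outdeg r u <= outdeg r v) ->
  alpha r v <= 1 /\ tau r v <= 2.
Proof. by move=> *; split; [apply: alpha_le1 | apply: tau_le2]. Qed.
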